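(* Fix $0<\gamma_1<\gamma_2$, $c\ge0$ and $d\ge0$, and let $\varphi(t)=D_{\gamma_1}(t)-cD_{\gamma_2}(t)+d$. Then: 1. The equation $\varphi(t)=0$ has a unique solution $t\in[\gamma_1,\gamma_2]$ if and only if $d\le cD_{\gamma_2}(\gamma_1)$. 2. If $d> cD_{\gamma_2}(\gamma_1)$, then the smallest value of $\varphi(t)$ over $t\in[\gamma_1,\gamma_2]$ is attained at $t=\gamma_1$ and equals $-cD_{\gamma_2}(\gamma_1)+d>0$. 3. If $d\le cD_{\gamma_2}(\gamma_1)$, the solution $t^*$ of $\varphi(t)=0$ in $[\gamma_1,\gamma_2]$ is given by $t^*=\dfrac{\gamma_2-\gamma_1-d}{\log(\gamma_2/\gamma_1)}$ when $c=1$, and when $c\neq1$ by $$t^*=\gamma_1^{1/(1-c)}\gamma_2^{-c/(1-c)}e^{z^*+1}=-\frac{\gamma_1+d-c\gamma_2}{(1-c)z^*},$$ where $z^*$ is a solution (given by an appropriate real branch of the Lambert $W$-function) of $$ze^z=-\frac1e\cdot\frac{1}{1-c}\Big(1+\frac{d-c\gamma_2}{\gamma_1}\Big)\Big(\frac{\gamma_2}{\gamma_1}\Big)^{c/(1-c)}.$$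
   Context: For $\gamma>0$ and $t\ge0$, $D_\gamma(t)=t\log(t/\gamma)-t+\gamma$ (natural logarithm). The Lambert $W$-function solves $W(x)e^{W(x)}=x$ for $x\ge-1/e$ and has two real branches $W_0$ (values $\ge-1$) and $W_{-1}$ (values $\le -1$). *)

From Stdlib Require Import Reals.
Open Scope R_scope.

(* D_gamma(t) = t log(t/gamma) - t + gamma  (used for t >= 0; at t = 0 Stdlib's
   ln 0 = 0 gives the correct value gamma). *)
Definition Dg (g t : R) : R := t * ln (t / g) - t + g.

Definition phi (g1 g2 c d t : R) : R := Dg g1 t - c * Dg g2 t + d.

Definition lambertK (g1 g2 c d : R) : R :=
  - (1 / exp 1) * (1 / (1 - c)) * (1 + (d - c * g2) / g1)
    * Rpower (g2 / g1) (c / (1 - c)).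

From Stdlib Require Import Reals Lra Psatz.
From Coquelicot Require Import Coquelicot.
Open Scope R_scope.

(* Since D_g' (t) = ln (t / g), on [g1, g2] the derivative of phi is
   ln (t / g1) - c ln (t / g2) >= 0, so phi is strictly increasing there.  As
   phi g2 = D_{g1} (g2) + d > 0 and phi g1 = d - c D_{g2} (g1), the intermediate
   value theorem gives parts 1 and 2.  For part 3, phi t is (1 - c) t ln t plus an
   affine function of t; for c = 1 the equation is linear in t, and otherwise the
   substitution ln t = z + 1 + (ln g1 - c ln g2) / (1 - c) turns phi t = 0 into
   (1 - c) t z = - (g1 + d - c g2), which after multiplying by the appropriate
   constant becomes z e^z = K. *)

Lemma ln_lt_sub_1 x : 0 < x -> x <> 1 -> ln x < x - 1.
Proof.
intros hx hx1.
assert (hln : ln x <> 0) by (apply ln_neq_0; lra).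
pose proof (exp_ineq1 (ln x) hln) as h.
rewrite exp_ln in h; lra.
Qed.

Lemma Dg_self g : 0 < g -> Dg g g = 0.
Proof. intros hg. unfold Dg. replace (g / g) with 1 by (field; lra). rewrite ln_1. ring. Qed.

(* Convexity of D_g, whose derivative is ln (t / g). *)
Lemma Dg_secant_bounds g s t : 0 < g -> 0 < s -> s < t ->
  (t - s) * ln (s / g) < Dg g t - Dg g s < (t - s) * ln (t / g).
Proof.
intros hg hs hst.
assert (hst1 : ln (s / t) < s / t - 1).
{ apply ln_lt_sub_1; [apply Rdiv_lt_0_compat; lra|].
  intro e. apply (f_equal (fun u => u * t)) in e. field_simplify in e; lra. }
assert (hts1 : ln (t / s) < t / s - 1).
{ apply ln_lt_sub_1; [apply Rdiv_lt_0_compat; lra|].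
  intro e. apply (f_equal (fun u => u * s)) in e. field_simplify in e; lra. }
unfold Dg. rewrite !ln_div in * by lra.
assert (e1 : t * (s / t) = s) by (field; lra).
assert (e2 : s * (t / s) = t) by (field; lra).
split; nra.
Qed.

Lemma Dg_pos g t : 0 < g -> 0 < t -> t <> g -> 0 < Dg g t.
Proof.
intros hg ht htg.
destruct (Rlt_or_le t g) as [hlt | hle].
- destruct (Dg_secant_bounds g t g) as [_ h]; try lra.
  rewrite Dg_self, Rdiv_diag, ln_1 in h; lra.
- destruct (Dg_secant_bounds g g t) as [h _]; try lra.
  rewrite Dg_self, Rdiv_diag, ln_1 in h; lra.
Qed.

Lemma phi_continuity_pt g1 g2 c d t : 0 < g1 -> 0 < g2 -> 0 < t ->
  continuity_pt (phi g1 g2 c d) t.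
Proof.
intros hg1 hg2 ht.
apply continuity_pt_filterlim, (ex_derive_continuous (V := R_NormedModule)).
unfold phi, Dg. auto_derive.
repeat split; apply Rdiv_lt_0_compat; lra.
Qed.

Lemma phi_increasing g1 g2 c d s t : 0 < g1 -> 0 <= c ->
  g1 <= s -> s < t -> t <= g2 -> phi g1 g2 c d s < phi g1 g2 c d t.
Proof.
intros hg1 hc hs hst ht.
destruct (Dg_secant_bounds g1 s t) as [h1 _]; try lra.
destruct (Dg_secant_bounds g2 s t) as [_ h2]; try lra.
assert (hs1 : 0 <= ln (s / g1)).
{ rewrite ln_div by lra. pose proof (ln_le g1 s). lra. }
assert (ht2 : ln (t / g2) <= 0).
{ rewrite ln_div by lra. pose proof (ln_le t g2). lra. }
assert (0 <= (t - s) * ln (s / g1)) by (apply Rmult_le_pos; lra).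
assert (0 <= c * ((t - s) * - ln (t / g2))) by (apply Rmult_le_pos; nra).
unfold phi. nra.
Qed.

Lemma phi_left g1 g2 c d : 0 < g1 -> phi g1 g2 c d g1 = - c * Dg g2 g1 + d.
Proof. intros hg1. unfold phi. rewrite Dg_self by lra. ring. Qed.

Lemma phi_right_pos g1 g2 c d : 0 < g1 -> g1 < g2 -> 0 <= d -> 0 < phi g1 g2 c d g2.
Proof.
intros hg1 hg12 hd. unfold phi. rewrite (Dg_self g2) by lra.
pose proof (Dg_pos g1 g2). lra.
Qed.

Lemma increasing_unique_root_iff (f : R -> R) a b : a < b ->
  (forall x, a <= x <= b -> continuity_pt f x) ->
  (forall x y, a <= x -> x < y -> y <= b -> f x < f y) -> 0 < f b ->
  (exists! t, a <= t <= b /\ f t = 0) <-> f a <= 0.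
Proof.
intros hab hcont hincr hb. split.
- intros [t [[ht e] _]].
  destruct (Req_dec a t) as [<- | hat]; [lra|].
  pose proof (hincr a t); lra.
- intros ha.
  assert (hroot : exists t, a <= t <= b /\ f t = 0).
  { destruct (Req_dec (f a) 0) as [e | ne]; [exists a; split; lra|].
    destruct (Ranalysis5.IVT_interv f a b) as [t ht]; try lra; eauto. }
  destruct hroot as [t [ht e]]. exists t. split; [tauto|].
  intros t' [ht' e'].
  destruct (Rtotal_order t t') as [l | [l | l]]; auto.
  + pose proof (hincr t t'); lra.
  + pose proof (hincr t' t); lra.
Qed.

Lemma phi_c1 g1 g2 d t : 0 < g1 -> 0 < g2 -> 0 < t ->
  phi g1 g2 1 d t = t * ln (g2 / g1) - (g2 - g1 - d).
Proof. intros hg1 hg2 ht. unfold phi, Dg. rewrite !ln_div by lra. ring. Qed.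

Lemma phi_c1_root g1 g2 d t : 0 < g1 -> g1 < g2 -> 0 < t ->
  phi g1 g2 1 d t = 0 -> t = (g2 - g1 - d) / ln (g2 / g1).
Proof.
intros hg1 hg12 ht e. rewrite phi_c1 in e by lra.
assert (0 < ln (g2 / g1)).
{ rewrite ln_div by lra. pose proof (ln_increasing g1 g2). lra. }
replace (g2 - g1 - d) with (t * ln (g2 / g1)) by lra.
field. lra.
Qed.

Definition lambert_arg (g1 g2 c t : R) : R := ln t - (ln g1 - c * ln g2) / (1 - c) - 1.

Lemma phi_lambert_form g1 g2 c d t : c <> 1 -> 0 < g1 -> 0 < g2 -> 0 < t ->
  phi g1 g2 c d t = (1 - c) * t * lambert_arg g1 g2 c t + (g1 + d - c * g2).
Proof.
intros hc hg1 hg2 ht. unfold phi, Dg, lambert_arg.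
rewrite !ln_div by lra. field. lra.
Qed.

Lemma exp_lambert_arg g1 g2 c t : c <> 1 -> 0 < t ->
  Rpower g1 (1 / (1 - c)) * Rpower g2 (- c / (1 - c)) * exp (lambert_arg g1 g2 c t + 1) = t.
Proof.
intros hc ht. unfold Rpower, lambert_arg. rewrite <- !exp_plus.
replace (_ + _ + _) with (ln t) by (field; lra).
apply exp_ln; lra.
Qed.

Lemma lambert_arg_solves g1 g2 c d t : c <> 1 -> 0 < g1 -> 0 < g2 -> 0 < t ->
  phi g1 g2 c d t = 0 ->
  lambert_arg g1 g2 c t * exp (lambert_arg g1 g2 c t) = lambertK g1 g2 c d.
Proof.
intros hc hg1 hg2 ht e.
rewrite phi_lambert_form in e by lra.
set (z := lambert_arg g1 g2 c t) in *.
set (l1 := ln g1). set (l2 := ln g2).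
assert (hexpz : exp z = exp (-1) * exp (- l1) * exp (c / (1 - c) * (l2 - l1)) * t).
{ rewrite <- (exp_ln t) by lra. rewrite <- !exp_plus. f_equal.
  unfold z, lambert_arg. fold l1 l2. field. lra. }
assert (hinv_e : 1 / exp 1 = exp (-1)).
{ replace (-1) with (- (1)) by ring. rewrite exp_Ropp. unfold Rdiv. ring. }
assert (hinv_g1 : 1 + (d - c * g2) / g1 = (g1 + d - c * g2) * exp (- l1)).
{ rewrite exp_Ropp. unfold l1. rewrite exp_ln by lra. field. lra. }
unfold lambertK, Rpower. rewrite ln_div by lra. fold l1 l2.
rewrite hexpz, hinv_e, hinv_g1.
replace (g1 + d - c * g2) with (- ((1 - c) * t * z)) by lra.
field. lra.
Qed.

Lemma lambert_arg_quotient g1 g2 c d t : c <> 1 -> 0 < g1 -> 0 < g2 -> 0 < t ->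
  phi g1 g2 c d t = 0 -> g1 + d - c * g2 <> 0 ->
  t = - (g1 + d - c * g2) / ((1 - c) * lambert_arg g1 g2 c t).
Proof.
intros hc hg1 hg2 ht e hA.
rewrite phi_lambert_form in e by lra.
assert (lambert_arg g1 g2 c t <> 0) by (intro z0; rewrite z0 in e; lra).
replace (g1 + d - c * g2) with (- ((1 - c) * t * lambert_arg g1 g2 c t)) by lra.
field. split; lra.
Qed.

Theorem lemma6 (g1 g2 c d : R) (hg1 : 0 < g1) (hg12 : g1 < g2)
  (hc : 0 <= c) (hd : 0 <= d) :
  (* 1. *)
  ((exists! t, (g1 <= t <= g2) /\ phi g1 g2 c d t = 0) <-> d <= c * Dg g2 g1)
  /\
  (* 2. *)
  (c * Dg g2 g1 < d ->
     (forall t, g1 <= t <= g2 -> phi g1 g2 c d g1 <= phi g1 g2 c d t)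
     /\ phi g1 g2 c d g1 = - c * Dg g2 g1 + d
     /\ 0 < - c * Dg g2 g1 + d)
  /\
  (* 3. *)
  (d <= c * Dg g2 g1 ->
     forall t, g1 <= t <= g2 -> phi g1 g2 c d t = 0 ->
       (c = 1 -> t = (g2 - g1 - d) / ln (g2 / g1))
       /\
       (c <> 1 ->
          exists z, z * exp z = lambertK g1 g2 c d
            /\ t = Rpower g1 (1 / (1 - c)) * Rpower g2 (- c / (1 - c)) * exp (z + 1)
            /\ (g1 + d - c * g2 <> 0 ->
                  t = - (g1 + d - c * g2) / ((1 - c) * z)))).
Proof.
pose proof (phi_left g1 g2 c d hg1) as hleft.
assert (hincr : forall s t, g1 <= s -> s < t -> t <= g2 -> phi g1 g2 c d s < phi g1 g2 c d t)
  by (intros; apply phi_increasing; lra).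
split; [|split].
- rewrite increasing_unique_root_iff, hleft; [lra | lra | | exact hincr |].
  + intros t ht. apply phi_continuity_pt; lra.
  + apply phi_right_pos; lra.
- intros hlt. split; [|split; lra].
  intros t ht. destruct (Req_dec g1 t) as [<- | hne]; [lra|].
  left. apply hincr; lra.
- intros _ t ht e. split.
  + intros ->. apply (phi_c1_root g1 g2 d); lra.
  + intros hc1. exists (lambert_arg g1 g2 c t).
    split; [|split].
    * apply lambert_arg_solves; lra.
    * symmetry. apply exp_lambert_arg; lra.
    * apply lambert_arg_quotient; lra.
Qed.
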